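(* Let $e_1,\dots,e_p\in\mathbb{C}^m$ and $f_1,\dots,f_p\in\mathbb{C}^n$ be unit vectors with $[e_1]=[e_2]=\cdots=[e_p]$. Then the face $F$ of $S$ generated by the states $\{\omega_{e_i\otimes f_i}:1\le i\le p\}$ is also a face of $K$; namely it is the face of $K$ associated with the subspace $L=e_1\otimes\operatorname{Span}\{f_1,\dots,f_p\}$ of $\mathbb{C}^m\otimes\mathbb{C}^n$, and $F$ is affinely isomorphic to the state space of $\mathcal{B}(L)$.
   Context: $\mathcal{B}(\mathbb{C}^m\otimes\mathbb{C}^n)$ is identified with $\mathcal{B}(\mathbb{C}^m)\otimes\mathcal{B}(\mathbb{C}^n)$. $K$ denotes the state space of $\mathcal{B}(\mathbb{C}^m\otimes\mathbb{C}^n)$ and $S\subseteq K$ the convex set of separable states, i.e. convex combinations of product states $\omega\otimes\sigma$; equivalently, convex combinations of pure product states $\omega_{x\otimes y}$ ($x\in\mathbb{C}^m$, $y\in\mathbb{C}^n$ unit vectors), where $\omega_z(A)=(Az,z)$. $[x]$ denotes the line spanned by $x$. The face of a convex set generated by a subset is the smallest face containing it. The face of $K$ associated with a subspace $M$ of $\mathbb{C}^m\otimes\mathbb{C}^n$ with projection $Q$ is $\{\omega\in K:\omega(Q)=1\}$, the convex hull of vector states $\omega_z$, $z\in M$ a unit vector. *)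

From HB Require Import structures.
From mathcomp Require Import all_boot all_order all_algebra all_field.
Set Implicit Arguments. Unset Strict Implicit. Unset Printing Implicit Defensive.
Import Order.TTheory GRing.Theory Num.Theory.
Local Open Scope ring_scope.

(* B(C^N) = 'M[algC]_N ; functionals on it *)
Definition fn (N : nat) := 'M[algC]_N -> algC.

Definition adj (m n : nat) (A : 'M[algC]_(m, n)) : 'M[algC]_(n, m) :=
  map_mx Num.conj (A^T).

Definition is_state (N : nat) (w : fn N) : Prop :=
  (forall (a : algC) (A B : 'M[algC]_N), w (a *: A + B) = a * w A + w B) /\
  (forall A : 'M[algC]_N, 0 <= w (adj A *m A)) /\
  w 1%:M = 1.

Definition K (N : nat) : fn N -> Prop := fun w => is_state w.

Definition vstate (N : nat) (z : 'cV[algC]_N) : fn N :=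
  fun A => (adj z *m A *m z) 0 0.

Definition unitv (N : nat) (z : 'cV[algC]_N) : Prop := (adj z *m z) 0 0 = 1.

(* x (x) y in C^m (x) C^n = C^(m*n), via the library identification mxvec *)
Definition tensv (m n : nat) (x : 'cV[algC]_m) (y : 'cV[algC]_n) : 'cV[algC]_(m * n) :=
  (mxvec (x *m y^T))^T.

Definition Sep (m n : nat) : fn (m * n) -> Prop := fun w =>
  exists (k : nat) (l : 'I_k -> algC) (x : 'I_k -> 'cV[algC]_m) (y : 'I_k -> 'cV[algC]_n),
    (forall i, 0 <= l i) /\ \sum_(i < k) l i = 1 /\
    (forall i, unitv (x i) /\ unitv (y i)) /\
    (forall A, w A = \sum_(i < k) l i * vstate (tensv (x i) (y i)) A).

Definition cc (N : nat) (t : algC) (w1 w2 : fn N) : fn N :=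
  fun A => t * w1 A + (1 - t) * w2 A.

Definition is_convex (N : nat) (C : fn N -> Prop) : Prop :=
  forall w1 w2 t, C w1 -> C w2 -> 0 <= t <= 1 -> C (cc t w1 w2).

Definition is_face (N : nat) (C F : fn N -> Prop) : Prop :=
  (forall w, F w -> C w) /\ is_convex F /\
  (forall w1 w2 t, C w1 -> C w2 -> 0 < t < 1 -> F (cc t w1 w2) -> F w1 /\ F w2).

Definition face_gen (N : nat) (C A : fn N -> Prop) : fn N -> Prop :=
  fun w => forall G, is_face C G -> (forall v, A v -> G v) -> G w.

Definition affine_iso (N M : nat) (F : fn N -> Prop) (G : fn M -> Prop) : Prop :=
  exists phi : fn N -> fn M,
    (forall w, F w -> G (phi w)) /\
    (forall w1 w2, F w1 -> F w2 -> phi w1 = phi w2 -> w1 = w2) /\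
    (forall v, G v -> exists w, F w /\ phi w = v) /\
    (forall w1 w2 t, F w1 -> F w2 -> 0 <= t <= 1 ->
       phi (cc t w1 w2) = cc t (phi w1) (phi w2)).

(* matrix whose rows span L = e (x) Span{f_1..f_p} *)
Definition Lmx (m n p : nat) (e : 'cV[algC]_m) (f : 'I_p -> 'cV[algC]_n)
  : 'M[algC]_(p, m * n) := \matrix_(i < p) (tensv e (f i))^T.

From HB Require Import structures.
From mathcomp Require Import all_boot all_order all_algebra all_field.
From mathcomp Require Import ring.
From Stdlib Require Import FunctionalExtensionality PropExtensionality.
Import Order.TTheory GRing.Theory Num.Theory.
Set Implicit Arguments. Unset Strict Implicit. Unset Printing Implicit Defensive.
Local Open Scope ring_scope.

(* Let e0 = e_1, h_i = e0 (x) f_i, L = span{h_i}, Q the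
   orthogonal projection onto L and faceL = {w in K | w(Q) = 1}.

   1. General facts: every state is a convex combination of vector states
      (spectral decomposition of its density matrix); faces absorb proper
      convex combinations; a state dominated, on positive elements, by a
      multiple of another state r is one endpoint of a segment through r.
   2. faceL is a face of K.  Its states are mixtures of vector states
      omega_z with z in L, i.e. z = e0 (x) g, hence faceL is contained in S.
      Since [e_i] = [e0], the generating states omega_(e_i (x) f_i) are the
      omega_(h_i), which lie in faceL; so the face of S they generate is
      contained in faceL.
   3. Conversely, for z = sum_i a_i h_i in L, |A z|^2 <= c sum_i |A h_i|^2
      (a parallelogram estimate replaces Cauchy-Schwarz), so omega_z is
      dominated by the barycentre r of the generators.  Hence r is a proper
      convex combination of omega_z and a state of faceL (which is separable),
      and every face of S containing the generators contains omega_z, thus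
      all of faceL.
   4. Compression by an isometry U : C^(rank L) -> C^(m*n) onto L is an affine
      bijection between faceL and the state space of B(L). *)

Lemma adjK m n (A : 'M[algC]_(m, n)) : adj (adj A) = A.
Proof. by apply/matrixP=> i j; rewrite !mxE conjCK. Qed.
Lemma adjM m n k (A : 'M[algC]_(m, n)) (B : 'M[algC]_(n, k)) :
  adj (A *m B) = adj B *m adj A.
Proof. by rewrite /adj trmx_mul map_mxM. Qed.
Lemma adjD m n (A B : 'M[algC]_(m, n)) : adj (A + B) = adj A + adj B.
Proof. by apply/matrixP=> i j; rewrite !mxE rmorphD. Qed.
Lemma adjN m n (A : 'M[algC]_(m, n)) : adj (- A) = - adj A.
Proof. by apply/matrixP=> i j; rewrite !mxE rmorphN. Qed.
Lemma adjB m n (A B : 'M[algC]_(m, n)) : adj (A - B) = adj A - adj B.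
Proof. by rewrite adjD adjN. Qed.
Lemma adjZ m n a (A : 'M[algC]_(m, n)) : adj (a *: A) = a^* *: adj A.
Proof. by apply/matrixP=> i j; rewrite !mxE rmorphM. Qed.
Lemma adj1 n : adj (1%:M : 'M[algC]_n) = 1%:M.
Proof. by apply/matrixP=> i j; rewrite !mxE eq_sym conjC_nat. Qed.
Lemma adj_delta m n (i : 'I_m) (j : 'I_n) : adj (delta_mx i j) = delta_mx j i.
Proof.
apply/matrixP=> a b; rewrite !mxE.
by case: (a == j); case: (b == i); rewrite /= ?rmorph1 ?rmorph0.
Qed.

Definition nrm n (x : 'cV[algC]_n) := (adj x *m x) 0 0.

Lemma nrmE n (x : 'cV[algC]_n) : nrm x = \sum_i (x i 0)^* * x i 0.
Proof. by rewrite /nrm mxE; apply: eq_bigr => i _; rewrite !mxE. Qed.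

Lemma nrm_ge0 n (x : 'cV[algC]_n) : 0 <= nrm x.
Proof. by rewrite nrmE sumr_ge0 // => i _; rewrite mulrC mul_conjC_ge0. Qed.

Lemma nrm_eq0 n (x : 'cV[algC]_n) : nrm x = 0 -> x = 0.
Proof.
rewrite nrmE => x0; apply/matrixP=> i j; rewrite (ord1 j) !mxE.
have /eqP : (x i 0)^* * x i 0 = 0.
  by apply: (psumr_eq0P _ x0) => // k _; rewrite mulrC mul_conjC_ge0.
by rewrite mulrC mul_conjC_eq0 => /eqP.
Qed.

Lemma nrm_scale n (c : algC) (x : 'cV[algC]_n) : nrm (c *: x) = c^* * c * nrm x.
Proof. by rewrite /nrm adjZ -scalemxAl -scalemxAr scalerA mxE. Qed.

Lemma nrm_parallelogram n (u v : 'cV[algC]_n) :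
  nrm (u + v) + nrm (u - v) = 2%:R * (nrm u + nrm v).
Proof.
rewrite /nrm adjB adjD !(mulmxDl, mulmxDr, mulmxN, mulNmx) !mxE.
ring.
Qed.

(* A crude but dimension-free substitute for Cauchy-Schwarz: the squared norm
   of a sum of k vectors is at most 2^k times the sum of the squared norms. *)
Lemma nrm_sum_le n k (v : 'I_k -> 'cV[algC]_n) :
  nrm (\sum_i v i) <= 2%:R ^+ k * \sum_i nrm (v i).
Proof.
elim: k v => [|k IH] v; first by rewrite !big_ord0 /nrm mulmx0 mxE mulr0.
rewrite !big_ord_recr /=; set S := \sum_(i < k) _.
have le_uv : nrm (S + v ord_max) <= 2%:R * (nrm S + nrm (v ord_max)).
  by rewrite -nrm_parallelogram lerDl nrm_ge0.
apply: (le_trans le_uv); rewrite exprS -mulrA ler_pM2l ?ltr0n // mulrDr.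
apply: lerD; first exact: IH.
by rewrite ler_peMl ?nrm_ge0 // exprn_ege1 // ler1n.
Qed.

Lemma nrm_comb_le n k (a : 'I_k -> algC) (v : 'I_k -> 'cV[algC]_n) :
  nrm (\sum_i a i *: v i) <=
  2%:R ^+ k * ((\sum_j (a j)^* * a j) * \sum_i nrm (v i)).
Proof.
apply: (le_trans (nrm_sum_le _)); rewrite ler_pM2l ?exprn_gt0 ?ltr0n //.
rewrite mulr_sumr; apply: ler_sum => i _; rewrite nrm_scale.
rewrite ler_wpM2r ?nrm_ge0 // (bigD1 i) //= lerDl.
by apply: sumr_ge0 => j _; rewrite mulrC mul_conjC_ge0.
Qed.

Section Linear.
Variable N : nat.
Definition lin (w : fn N) :=
  forall (a : algC) (A B : 'M[algC]_N), w (a *: A + B) = a * w A + w B.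
Variable w : fn N.
Hypothesis hw : lin w.

Lemma lin0 : w 0 = 0.
Proof.
have := hw 1 0 0; rewrite scale1r addr0 mul1r => /eqP.
by rewrite -subr_eq0 opprD addrA subrr add0r oppr_eq0 => /eqP.
Qed.
Lemma linD A B : w (A + B) = w A + w B.
Proof. by have := hw 1 A B; rewrite scale1r mul1r. Qed.
Lemma linZ a A : w (a *: A) = a * w A.
Proof. by have := hw a A 0; rewrite addr0 lin0 addr0. Qed.
Lemma linB A B : w (A - B) = w A - w B.
Proof. by rewrite linD -scaleN1r linZ mulN1r. Qed.
Lemma lin_sum I (r : seq I) (P : pred I) (F : I -> 'M[algC]_N) :
  w (\sum_(i <- r | P i) F i) = \sum_(i <- r | P i) w (F i).
Proof. by elim/big_rec2: _ => [|i A B _ <-]; [exact: lin0 | rewrite linD]. Qed.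

Definition dens : 'M[algC]_N := \matrix_(i, j) w (delta_mx j i).

Lemma densE X : w X = \tr (dens *m X).
Proof.
rewrite {1}(matrix_sum_delta X) lin_sum.
rewrite /mxtrace; under [RHS]eq_bigr => i _ do rewrite mxE.
rewrite [RHS]exchange_big; apply: eq_bigr => i _; rewrite lin_sum.
by apply: eq_bigr => j _; rewrite linZ mxE mulrC.
Qed.
End Linear.

Lemma vstateE N (y : 'cV[algC]_N) X : vstate y X = \tr (y *m adj y *m X).
Proof. by rewrite /vstate -[in RHS]mulmxA [in RHS]mxtrace_mulC /mxtrace big_ord1. Qed.

Lemma vstate_lin N (y : 'cV[algC]_N) : lin (vstate y).
Proof.
move=> a A B; rewrite /vstate mulmxDr mulmxDl mxE.
by rewrite -scalemxAr -scalemxAl mxE.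
Qed.

Lemma vstate_adj N M (y : 'cV[algC]_N) (A : 'M[algC]_(M, N)) :
  vstate y (adj A *m A) = nrm (A *m y).
Proof. by rewrite /vstate /nrm mulmxA -mulmxA -adjM. Qed.

Lemma vstate_state N (y : 'cV[algC]_N) : unitv y -> K (vstate y).
Proof.
move=> hy; split; first exact: vstate_lin.
split; first by move=> A; rewrite vstate_adj nrm_ge0.
by rewrite /vstate mulmx1.
Qed.

Lemma vstate_scale N (a : algC) (z : 'cV[algC]_N) :
  a^* * a = 1 -> vstate (a *: z) = vstate z.
Proof.
move=> ha; apply: functional_extensionality => X.
rewrite /vstate adjZ -scalemxAl -scalemxAl -scalemxAr !mxE.
by rewrite mulrA ha mul1r.
Qed.

Lemma real_multiples_eq0 (u : algC) : (forall c, (c * u)^* = c * u) -> u = 0.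
Proof.
move=> H; have := H ('i * u^*); rewrite !rmorphM /= conjCi conjCK => /eqP.
rewrite -subr_eq0 -!mulrA (mulrC u^* u) mulNr -opprD oppr_eq0 -mulr2n.
rewrite mulrn_eq0 /= mulf_eq0 (negPf (neq0Ci _)) /= mulf_eq0 conjC_eq0 orbb.
by move/eqP.
Qed.

Lemma diag_dec N (P : 'M[algC]_N) (a : 'rV[algC]_N) :
  adj P *m diag_mx a *m P = \sum_k a 0 k *: (adj (row k P) *m row k P).
Proof.
rewrite mul_mx_diag; apply/matrixP=> i j; rewrite summxE !mxE.
apply: eq_bigr => k _; rewrite !mxE big_ord1 !mxE.
by rewrite mulrA (mulrC (a 0 k)).
Qed.

Lemma entry_adj_row M N (P : 'M[algC]_(M, N)) (D : 'M[algC]_N) k :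
  (row k P *m D *m adj (row k P)) 0 0 = (P *m D *m adj P) k k.
Proof.
rewrite !mxE; apply: eq_bigr => j _; rewrite !mxE; congr (_ * _).
by apply: eq_bigr => i _; rewrite !mxE.
Qed.

Section States.
Variables (N : nat) (w : fn N).
Hypothesis hw : K w.
Let hl : lin w := hw.1.

(* States are hermitian, w (adj X) = conj (w X), by polarisation of positivity. *)
Lemma state_adj X : w (adj X) = (w X)^*.
Proof.
set a := w X; set b := w (adj X).
suff : a - b^* = 0 by move/eqP; rewrite subr_eq0 => /eqP ->; rewrite conjCK.
apply: real_multiples_eq0 => c; apply/CrealP.
have E : adj (1%:M + c *: X) *m (1%:M + c *: X) =
   1%:M + (c *: X + (c^* *: adj X + (c^* * c) *: (adj X *m X))).
  rewrite adjD adj1 adjZ mulmxDl !mulmxDr !mul1mx mulmx1 -!scalemxAl -scalemxAr.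
  by rewrite scalerA !addrA.
have hE := ger0_real (hw.2.1 (1%:M + c *: X)).
rewrite E !(linD hl) !(linZ hl) hw.2.2 in hE.
have hq : (c^* * c) * w (adj X *m X) \is Num.real.
  by rewrite rpredM // ?ger0_real // ?hw.2.1 // mulrC mul_conjC_ge0.
have hs : c * a + c^* * b \is Num.real.
  have -> : c * a + c^* * b = (1 + (c * a + (c^* * b + c^* * c * w (adj X *m X))))
       - 1 - c^* * c * w (adj X *m X).
    by rewrite (addrC 1) addrK addrA addrK.
  by apply: rpredB => //; apply: rpredB => //; apply: rpred1.
have hr : c * b^* + c^* * b \is Num.real.
  by apply/CrealP; rewrite rmorphD !rmorphM /= !conjCK addrC.
have -> : c * (a - b^*) = (c * a + c^* * b) - (c * b^* + c^* * b).
  by rewrite opprD addrACA subrr addr0 mulrBr.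
exact: rpredB.
Qed.

Lemma dens_adj : adj (dens w) = dens w.
Proof. by apply/matrixP=> i j; rewrite !mxE -state_adj adj_delta. Qed.

(* Spectral decomposition: every state is a convex combination of N vector
   states (the eigenvectors of its density matrix). *)
Lemma state_decomposition : exists (d : 'I_N -> algC) (y : 'I_N -> 'cV[algC]_N),
  [/\ forall k, 0 <= d k, \sum_k d k = 1, forall k, unitv (y k) &
      forall X, w X = \sum_k d k * vstate (y k) X].
Proof.
set D := dens w.
have /orthomx_spectralP E : D \is normalmx.
  by apply/normalmxP; rewrite -/(adj D) dens_adj.
set P := spectralmx D in E; set sp := spectral_diag D in E.
have Pu : P *m adj P = 1%:M by apply/unitarymxP/spectral_unitarymx.
have iP : invmx P = adj P by apply: invmx_unitary; apply: spectral_unitarymx.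
rewrite iP in E.
set y := fun k => adj (row k P).
have y_unit k : adj (y k) *m y k = 1%:M.
  apply/matrixP=> a b; rewrite (ord1 a) (ord1 b) /y adjK.
  have := entry_adj_row P 1%:M k; rewrite !mulmx1 Pu => ->.
  by rewrite !mxE !eqxx.
have w_dec X : w X = \sum_k sp 0 k * vstate (y k) X.
  rewrite (densE hl) -/D {1}E diag_dec mulmx_suml raddf_sum /=.
  by apply: eq_bigr => k _; rewrite -scalemxAl mxtraceZ vstateE /y adjK.
have sp_w k : sp 0 k = w (y k *m adj (y k)).
  have hdiag : P *m D *m adj P = diag_mx sp.
    by rewrite E !mulmxA Pu mul1mx -mulmxA Pu mulmx1.
  rewrite (densE hl) mxtrace_mulC -vstateE /vstate /y adjK entry_adj_row.
  by rewrite hdiag mxE eqxx mulr1n.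
exists (fun k => sp 0 k), y; split.
- move=> k; rewrite sp_w.
  have -> : y k *m adj (y k) = adj (y k *m adj (y k)) *m (y k *m adj (y k)).
    by rewrite adjM adjK mulmxA -(mulmxA (y k)) y_unit mulmx1.
  exact: hw.2.1.
- have := w_dec 1%:M; rewrite hw.2.2 => ->.
  by apply: eq_bigr => k _; rewrite /vstate mulmx1 y_unit mxE eqxx mulr1.
- by move=> k; rewrite /unitv y_unit mxE eqxx.
- exact: w_dec.
Qed.

Lemma state_pos_rect M (A : 'M[algC]_(M, N)) : 0 <= w (adj A *m A).
Proof.
have [d [y [d0 _ _ ->]]] := state_decomposition.
by rewrite sumr_ge0 // => k _; rewrite vstate_adj mulr_ge0 ?nrm_ge0.
Qed.
End States.

Lemma convex_sum N (C : fn N -> Prop) : is_convex C ->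
  forall k (l : 'I_k -> algC) (s : 'I_k -> fn N),
  (forall i, 0 <= l i) -> \sum_i l i = 1 -> (forall i, C (s i)) ->
  C (fun X => \sum_i l i * s i X).
Proof.
move=> hC; elim=> [|k IH] l s l0 l1 sC.
  by move: l1; rewrite big_ord0 => /esym/eqP; rewrite oner_eq0.
move: l1; rewrite big_ord_recr /= => l1.
set l' := fun i : 'I_k => l (widen_ord (leqnSn k) i).
set s' := fun i : 'I_k => s (widen_ord (leqnSn k) i).
set R := \sum_(i < k) l' i in l1.
have R0 : 0 <= R by apply: sumr_ge0 => i _; apply: l0.
have E : R = 1 - l ord_max by rewrite -l1 addrK.
have [lm1|lm1] := eqVneq (l ord_max) 1.
  have l'0 i : l' i = 0.
    have R00 : R = 0 by rewrite E lm1 subrr.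
    by apply: (psumr_eq0P _ R00) => // j _; apply: l0.
  suff -> : (fun X => \sum_i l i * s i X) = s ord_max by apply: sC.
  apply: functional_extensionality => X; rewrite big_ord_recr /= lm1 mul1r.
  by rewrite big1 ?add0r // => i _; rewrite [l _]l'0 mul0r.
have Rn0 : R != 0 by rewrite E subr_eq0 eq_sym.
have Cg : C (fun X => \sum_i l' i / R * s' i X).
  apply: IH => [i||i]; last exact: sC.
  - by rewrite divr_ge0 ?l0.
  - by rewrite -mulr_suml divff.
have lm01 : 0 <= l ord_max <= 1 by rewrite l0 /= -subr_ge0 -E.
have := hC _ _ _ (sC ord_max) Cg lm01.
congr C; apply: functional_extensionality => X; rewrite /cc big_ord_recr /= addrC.
congr (_ + _); rewrite -E mulr_sumr; apply: eq_bigr => i _.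
by rewrite mulrA mulrCA divff // mulr1.
Qed.

Lemma K_convex N : is_convex (@K N).
Proof.
move=> w1 w2 t [l1 [p1 u1]] [l2 [p2 u2]] /andP[t0 t1]; split.
  move=> a A B; rewrite /cc l1 l2.
  rewrite !mulrDr !mulrA (mulrC t a) (mulrC (1 - t) a) -!mulrA.
  by rewrite addrACA -!mulrDr.
split; last by rewrite /cc u1 u2 !mulr1 subrKC.
by move=> A; rewrite /cc addr_ge0 ?mulr_ge0 ?subr_ge0.
Qed.

Lemma convex_eq1 (t a b : algC) : 0 < t < 1 -> 0 <= a <= 1 -> 0 <= b <= 1 ->
  t * a + (1 - t) * b = 1 -> a = 1 /\ b = 1.
Proof.
move=> /andP[t0 t1] /andP[a0 a1] /andP[b0 b1] E.
have E2 : t * (1 - a) + (1 - t) * (1 - b) = 0.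
  by rewrite !mulrBr !mulr1 addrACA -opprD E (addrC t) subrK subrr.
move/eqP: E2; rewrite paddr_eq0; last 2 first.
- by apply: mulr_ge0; [exact: ltW | rewrite subr_ge0].
- by apply: mulr_ge0; rewrite subr_ge0 // ltW.
rewrite !mulf_eq0 (gt_eqF t0) /= [1 - t == 0]subr_eq0 (eq_sym 1 t) (lt_eqF t1) /=.
by rewrite !subr_eq0 => /andP[/eqP <- /eqP <-].
Qed.

Lemma convex_sum_eq1 k (d a : 'I_k -> algC) :
  (forall j, 0 <= d j) -> \sum_j d j = 1 -> (forall j, a j <= 1) ->
  \sum_j d j * a j = 1 -> forall j, d j != 0 -> a j = 1.
Proof.
move=> d0 d1 a1 da1 j dj.
have defect0 : \sum_i d i * (1 - a i) = 0.
  under eq_bigr => i _ do rewrite mulrBr mulr1.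
  by rewrite sumrB d1 da1 subrr.
have /eqP : d j * (1 - a j) = 0.
  by apply: (psumr_eq0P _ defect0) => // i _; rewrite mulr_ge0 ?subr_ge0.
by rewrite mulf_eq0 (negPf dj) subr_eq0 => /eqP <-.
Qed.

(* If t v <= r on positive elements, then r is a proper convex combination
   of v and the state (r - t v) / (1 - t). *)
Lemma state_residual N (r v : fn N) (t : algC) : K r -> K v -> 0 < t < 1 ->
  (forall A : 'M[algC]_N, t * v (adj A *m A) <= r (adj A *m A)) ->
  K (fun X => (r X - t * v X) / (1 - t)).
Proof.
move=> [rl [_ r1]] [vl [_ v1]] /andP[t0 t1] dom.
have t1n0 : 1 - t != 0 by rewrite subr_eq0 eq_sym (lt_eqF t1).
split.
  move=> a A B; rewrite rl vl mulrA -mulrDl; congr (_ / _).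
  by rewrite mulrDr opprD addrACA mulrBr (mulrCA a t).
split; last by rewrite r1 v1 mulr1 divff.
by move=> A; rewrite divr_ge0 ?subr_ge0 ?dom ?(ltW t1).
Qed.

Lemma face_absorb N (C G : fn N -> Prop) (r v s : fn N) (t : algC) :
  is_face C G -> G r -> C v -> C s -> 0 < t < 1 -> r = cc t v s -> G v.
Proof.
by move=> [_ [_ Gf]] Gr Cv Cs ht Er; rewrite Er in Gr; case: (Gf v s t Cv Cs ht Gr).
Qed.

Section Tensor.
Variables m n : nat.
Implicit Types (x : 'cV[algC]_m) (y : 'cV[algC]_n).

Lemma tensvZ x a y : tensv x (a *: y) = a *: tensv x y.
Proof. by rewrite /tensv linearZ /= -scalemxAr linearZ /= linearZ. Qed.
Lemma tensvZl x a y : tensv (a *: x) y = a *: tensv x y.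
Proof. by rewrite /tensv -(scalemxAl a x) linearZ /= linearZ. Qed.
Lemma tensv_sum x I (r : seq I) (P : pred I) (F : I -> 'cV[algC]_n) :
  tensv x (\sum_(i <- r | P i) F i) = \sum_(i <- r | P i) tensv x (F i).
Proof.
elim/big_rec2: _ => [|i A B _ <-].
  by rewrite /tensv trmx0 mulmx0 linear0 trmx0.
by rewrite /tensv linearD /= mulmxDr !linearD.
Qed.

Lemma nrm_tensv x y : nrm (tensv x y) = nrm x * nrm y.
Proof.
have adjT : adj (tensv x y) = mxvec ((adj x)^T *m adj y).
  rewrite /adj /tensv trmxK map_mxvec; congr mxvec.
  by rewrite map_mxM map_trmx !trmxK.
rewrite /nrm adjT /tensv mxvec_dotmul !mulmxA -mulmxA mxE big_ord1.
by congr (_ * _); rewrite -trmx_mul mxE.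
Qed.

Lemma unitv_tensv x y : unitv x -> unitv y -> unitv (tensv x y).
Proof. by rewrite /unitv -!/(nrm _) nrm_tensv => -> ->; rewrite mulr1. Qed.

Lemma Sep_K (w : fn (m * n)) : Sep w -> K w.
Proof.
move=> [k [l [x [y [l0 [l1 [hu hw]]]]]]].
have -> : w = (fun X => \sum_i l i * vstate (tensv (x i) (y i)) X).
  by apply: functional_extensionality => X; rewrite hw.
apply: convex_sum => //; first exact: K_convex.
by move=> i; apply/vstate_state/unitv_tensv; case: (hu i).
Qed.
End Tensor.

Section FaceOfL.
Variables (m n p : nat) (hp : (0 < p)%N).
Variables (e : 'I_p -> 'cV[algC]_m) (f : 'I_p -> 'cV[algC]_n).
Hypothesis e_unit : forall i, unitv (e i).
Hypothesis f_unit : forall i, unitv (f i).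
Hypothesis e_line : forall i, ((e i)^T == (e (Ordinal hp))^T)%MS.

Let e0 := e (Ordinal hp).
Let V := Lmx e0 f.
Let h i := tensv e0 (f i).

Definition isoL : 'M[algC]_(m * n, \rank V) := (schmidt (row_base V))^T.
Let U := isoL.

Definition projL : 'M[algC]_(m * n) := U *m adj U.
Let Q := projL.

Lemma isoL_isometry : adj U *m U = 1%:M.
Proof.
have /unitarymxP uB : schmidt (row_base V) \is unitarymx.
  by apply: schmidt_unitarymx; apply: rank_leq_col.
have := congr1 trmx uB; rewrite trmx_mul trmx1 => <-.
by rewrite /U /isoL /adj !map_trmx !trmxK.
Qed.

Lemma isoL_span : (U^T :=: V)%MS.
Proof.
rewrite /U /isoL trmxK; apply: eqmx_trans (eq_row_base V).
exact/eqmx_schmidt_free/row_base_free.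
Qed.

Lemma projL_adj : adj Q = Q.
Proof. by rewrite /Q /projL adjM adjK. Qed.

Lemma projL_idem : Q *m Q = Q.
Proof. by rewrite /Q /projL !mulmxA -(mulmxA U) isoL_isometry mulmx1. Qed.

Lemma projL_fix (z : 'cV[algC]_(m * n)) : Q *m z = z <-> (z^T <= V)%MS.
Proof.
split=> [<-|]; first by rewrite /Q /projL -mulmxA trmx_mul -isoL_span; apply: submxMl.
rewrite -isoL_span => /mulmxKpV zU.
have -> : z = U *m (z^T *m pinvmx U^T)^T by apply: trmx_inj; rewrite trmx_mul trmxK zU.
by rewrite /Q /projL -mulmxA (mulmxA (adj U)) isoL_isometry mul1mx.
Qed.

(* Coordinates of a vector of L on the spanning family h i = e0 (x) f i. *)
Definition coordL (z : 'cV[algC]_(m * n)) (i : 'I_p) : algC :=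
  (z^T *m pinvmx V) 0 i.

Lemma projL_fix_tensv z :
  Q *m z = z -> z = tensv e0 (\sum_i coordL z i *: f i).
Proof.
move=> /projL_fix /mulmxKpV zV.
apply: trmx_inj; rewrite -{1}zV mulmx_sum_row tensv_sum raddf_sum /=.
by apply: eq_bigr => i _; rewrite tensvZ linearZ /= rowK.
Qed.

Lemma projL_fix_comb z : Q *m z = z -> z = \sum_i coordL z i *: h i.
Proof.
move=> /projL_fix_tensv {1}->; rewrite tensv_sum.
by apply: eq_bigr => i _; rewrite tensvZ.
Qed.

Lemma projL_h i : Q *m h i = h i.
Proof. by apply/projL_fix; rewrite -[(h i)^T](rowK (fun j => (h j)^T)) row_sub. Qed.

Lemma h_unit i : unitv (h i).
Proof. exact: unitv_tensv (e_unit _) (f_unit i). Qed.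

(* Since [e i] = [e0], the generating states are the vector states of h i. *)
Lemma gen_vstate i : vstate (tensv (e i) (f i)) = vstate (h i).
Proof.
have /andP[ei_e0 _] := e_line i.
set c := ((e i)^T *m pinvmx e0^T) 0 0.
have ec : e i = c *: e0.
  apply: trmx_inj; rewrite -(mulmxKpV ei_e0) linearZ /=.
  by rewrite [_ *m pinvmx _]mx11_scalar mul_scalar_mx.
have hc : c^* * c = 1.
  by have := e_unit i; rewrite /unitv -/(nrm _) ec nrm_scale [nrm _]e_unit mulr1.
by rewrite ec tensvZl vstate_scale.
Qed.

Lemma projL_compl : adj (1%:M - Q) *m (1%:M - Q) = 1%:M - Q.
Proof.
rewrite adjB adj1 projL_adj mulmxBl !mulmxBr !mul1mx !mulmx1 projL_idem.
by rewrite subrr subr0.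
Qed.

(* For a state, 0 <= w Q <= 1, since Q and 1 - Q are positive. *)
Lemma state_projL (w : fn (m * n)) : K w -> 0 <= w Q <= 1.
Proof.
move=> hw; apply/andP; split.
  by rewrite -projL_idem -{1}projL_adj; apply: hw.2.1.
by rewrite -subr_ge0 -hw.2.2 -(linB hw.1) -projL_compl; apply: hw.2.1.
Qed.

Lemma vstate_projL1 (z : 'cV[algC]_(m * n)) :
  unitv z -> vstate z Q = 1 -> Q *m z = z.
Proof.
move=> hz hQ; have : nrm ((1%:M - Q) *m z) = 0.
  rewrite -vstate_adj projL_compl (linB (vstate_lin z)) hQ.
  by rewrite /vstate mulmx1 hz subrr.
by move/nrm_eq0/eqP; rewrite mulmxBl mul1mx subr_eq0 => /eqP <-.
Qed.

Definition faceL (w : fn (m * n)) : Prop := K w /\ w Q = 1.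

Lemma faceL_decomposition (w : fn (m * n)) : faceL w ->
  exists (d : 'I_(m * n) -> algC) (z : 'I_(m * n) -> 'cV[algC]_(m * n)),
  [/\ forall k, 0 <= d k, \sum_k d k = 1, forall k, unitv (z k) /\ Q *m z k = z k &
      forall X, w X = \sum_k d k * vstate (z k) X].
Proof.
move=> [hw wQ]; have [d [y [d0 d1 y_unit w_dec]]] := state_decomposition hw.
have yQ : forall k, d k != 0 -> vstate (y k) Q = 1.
  apply: convex_sum_eq1 => // [j|]; last by rewrite -w_dec.
  by case/andP: (state_projL (vstate_state (y_unit j))).
exists d, (fun k => if d k == 0 then h (Ordinal hp) else y k); split => //.
  move=> k; case: eqP => dk; first by split; [apply: h_unit | apply: projL_h].
  by split; last apply: vstate_projL1 (yQ k (introN eqP dk)).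
by move=> X; rewrite w_dec; apply: eq_bigr => k _; case: eqP => [->|]; rewrite ?mul0r.
Qed.

(* Every state of faceL is separable: its vector states are e0 (x) g. *)
Lemma faceL_Sep (w : fn (m * n)) : faceL w -> Sep w.
Proof.
move=> Lw; have [d [z [d0 d1 zL w_dec]]] := faceL_decomposition Lw.
exists (m * n)%N, d, (fun _ => e0), (fun k => \sum_i coordL (z k) i *: f i).
split => //; split => //; split => [k|X]; last first.
  by rewrite w_dec; apply: eq_bigr => k _; rewrite -projL_fix_tensv //; case: (zL k).
split; first exact: e_unit.
have [zk_unit /projL_fix_tensv zk_e0] := zL k.
by move: zk_unit; rewrite /unitv -!/(nrm _) {1}zk_e0 nrm_tensv [nrm e0]e_unit mul1r.
Qed.

Lemma faceL_convex : is_convex faceL.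
Proof.
move=> w1 w2 t [k1 q1] [k2 q2] ht; split; first exact: K_convex.
by rewrite /cc q1 q2 !mulr1 subrKC.
Qed.

(* faceL is a face of any convex set C with faceL <= C <= K, e.g. of K and of S. *)
Lemma faceL_face_of (C : fn (m * n) -> Prop) :
  (forall w, C w -> K w) -> (forall w, faceL w -> C w) -> is_face C faceL.
Proof.
move=> CK LC; split=> //; split; first exact: faceL_convex.
move=> w1 w2 t /CK k1 /CK k2 ht [_ wQ].
by have [q1 q2] := convex_eq1 ht (state_projL k1) (state_projL k2) wQ.
Qed.

Lemma gen_faceL i : faceL (vstate (tensv (e i) (f i))).
Proof.
rewrite gen_vstate; split; first exact/vstate_state/h_unit.
by rewrite /vstate -mulmxA projL_h; apply: h_unit.
Qed.

Definition avgL : fn (m * n) := fun X => \sum_i p%:R^-1 * vstate (h i) X.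

Lemma avgL_convex_comb (C : fn (m * n) -> Prop) : is_convex C ->
  (forall i, C (vstate (h i))) -> C avgL.
Proof.
move=> hC hCh; apply: convex_sum => // [i|]; first by rewrite invr_ge0 ler0n.
by rewrite sumr_const card_ord -[LHS]mulr_natr mulVf // pnatr_eq0 -lt0n.
Qed.

Lemma avgL_faceL : faceL avgL.
Proof.
apply: avgL_convex_comb => [|i]; first exact: faceL_convex.
by rewrite -gen_vstate; apply: gen_faceL.
Qed.

(* Vector states of L are dominated by a multiple of the barycentre: writing
   z = sum_i a_i h_i gives |A z|^2 <= c sum_i |A h_i|^2. *)
Lemma avgL_dominates (z : 'cV[algC]_(m * n)) : Q *m z = z ->
  exists c, 0 <= c /\
  forall A : 'M[algC]_(m * n), vstate z (adj A *m A) <= c * avgL (adj A *m A).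
Proof.
move=> /projL_fix_comb zL; set a := coordL z.
set M := \sum_j (a j)^* * a j.
have M0 : 0 <= M by apply: sumr_ge0 => j _; rewrite mulrC mul_conjC_ge0.
exists (2%:R ^+ p * M * p%:R); split; first by rewrite !mulr_ge0 ?exprn_ge0.
move=> A; rewrite vstate_adj zL.
have -> : A *m (\sum_i a i *: h i) = \sum_i a i *: (A *m h i).
  by rewrite mulmx_sumr; apply: eq_bigr => i _; rewrite scalemxAr.
have -> : avgL (adj A *m A) = p%:R^-1 * \sum_i nrm (A *m h i).
  by rewrite /avgL mulr_sumr; apply: eq_bigr => i _; rewrite vstate_adj.
rewrite mulrA -(mulrA _ p%:R) mulfV ?pnatr_eq0 -?lt0n // mulr1 -mulrA.
exact: nrm_comb_le.
Qed.

(* Every vector state of L lies in every face of S containing the generators: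
   the barycentre is a proper convex combination of it and another state of faceL. *)
Lemma vstateL_in_face (G : fn (m * n) -> Prop) (z : 'cV[algC]_(m * n)) :
  is_face (@Sep m n) G -> (forall i, G (vstate (tensv (e i) (f i)))) ->
  unitv z -> Q *m z = z -> G (vstate z).
Proof.
move=> Gface Ggen z_unit zL.
have [c [c0 dom]] := avgL_dominates zL.
have c2 : 0 < 2%:R + c by rewrite ltr_wpDr ?ltr0n.
set t := (2%:R + c)^-1.
have t01 : 0 < t < 1.
  by rewrite invr_gt0 c2 invf_lt1 // ltr_wpDr // ltr1n.
have tc : t * c <= 1 by rewrite mulrC ler_pdivrMr // mul1r lerDr ler0n.
have Lz : faceL (vstate z).
  by split; [exact: vstate_state | rewrite /vstate -mulmxA zL].
have [Kavg avgQ] := avgL_faceL.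
set s := fun X => (avgL X - t * vstate z X) / (1 - t).
have Ks : K s.
  apply: (state_residual Kavg Lz.1 t01) => A.
  have t0 : 0 <= t by rewrite invr_ge0 ltW.
  have avg0 : 0 <= avgL (adj A *m A) := state_pos_rect Kavg A.
  apply: (le_trans (ler_wpM2l t0 (dom A))).
  by rewrite mulrA; apply: ler_piMl avg0 tc.
have t1n0 : 1 - t != 0.
  by case/andP: t01 => _ t1; rewrite subr_eq0 eq_sym lt_eqF.
have Ls : faceL s.
  by split; last rewrite /s avgQ Lz.2 mulr1 (divff t1n0).
apply: (face_absorb Gface _ (faceL_Sep Lz) (faceL_Sep Ls) t01).
  apply: avgL_convex_comb => [|i]; first by case: Gface => _ [].
  by rewrite -gen_vstate; apply: Ggen.
apply: functional_extensionality => X.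
by rewrite /cc /s mulrCA (divff t1n0) mulr1 addrC subrK.
Qed.

Lemma faceL_in_face (G : fn (m * n) -> Prop) (w : fn (m * n)) :
  is_face (@Sep m n) G -> (forall i, G (vstate (tensv (e i) (f i)))) ->
  faceL w -> G w.
Proof.
move=> Gface Ggen Lw; have [d [z [d0 d1 zL w_dec]]] := faceL_decomposition Lw.
have -> : w = fun X => \sum_k d k * vstate (z k) X.
  exact: functional_extensionality.
apply: convex_sum => // [|k]; first by case: Gface => _ [].
by case: (zL k) => z_unit zQ; apply: vstateL_in_face.
Qed.

Lemma face_gen_faceL (w : fn (m * n)) :
  face_gen (@Sep m n) (fun v => exists i, v = vstate (tensv (e i) (f i))) w <->
  faceL w.
Proof.
split=> [Fw|Lw G Gface Ggen].
  apply: Fw; first by apply: faceL_face_of => [w' /Sep_K|w' /faceL_Sep].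
  by move=> v [i ->]; apply: gen_faceL.
by apply: faceL_in_face => // i; apply: Ggen; exists i.
Qed.

Lemma faceL_compress (w : fn (m * n)) X : faceL w -> w (Q *m X *m Q) = w X.
Proof.
move=> Lw; have [d [z [_ _ zL w_dec]]] := faceL_decomposition Lw.
rewrite !w_dec; apply: eq_bigr => k _; have [_ zQ] := zL k.
have zQ' : adj (z k) *m Q = adj (z k) by rewrite -projL_adj -adjM zQ.
congr (_ * _); rewrite /vstate.
have -> : adj (z k) *m (Q *m X *m Q) *m z k = (adj (z k) *m Q) *m X *m (Q *m z k).
  by rewrite !mulmxA.
by rewrite zQ' zQ.
Qed.

Definition restrL (w : fn (m * n)) : fn (\rank V) := fun A => w (U *m A *m adj U).
Definition extendL (v : fn (\rank V)) : fn (m * n) := fun X => v (adj U *m X *m U).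

Lemma state_compress k l (W : 'M[algC]_(k, l)) (v : fn k) :
  K v -> v (W *m adj W) = 1 -> K (fun X => v (W *m X *m adj W)).
Proof.
move=> [vl [vpos v1]] vW; split.
  by move=> a A B; rewrite mulmxDr mulmxDl -scalemxAr -scalemxAl vl.
split; last by rewrite mulmx1.
move=> A; have -> : W *m (adj A *m A) *m adj W = adj (A *m adj W) *m (A *m adj W).
  by rewrite adjM adjK !mulmxA.
exact: state_pos_rect.
Qed.

Lemma restrL_K w : faceL w -> K (restrL w).
Proof. by move=> [Kw wQ]; apply: state_compress Kw wQ. Qed.

Lemma extendL_faceL v : K v -> faceL (extendL v).
Proof.
move=> Kv; split.
  have := @state_compress _ _ (adj U) v Kv.
  by rewrite adjK isoL_isometry; apply; exact: Kv.2.2.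
by rewrite /extendL /Q /projL !mulmxA isoL_isometry mul1mx isoL_isometry Kv.2.2.
Qed.

Lemma restrL_extendL v : restrL (extendL v) = v.
Proof.
apply: functional_extensionality => A.
by rewrite /restrL /extendL !mulmxA isoL_isometry mul1mx -mulmxA isoL_isometry mulmx1.
Qed.

Lemma extendL_restrL w : faceL w -> extendL (restrL w) = w.
Proof.
move=> Lw; apply: functional_extensionality => X.
by rewrite /restrL /extendL !mulmxA -(mulmxA _ U) -[U *m adj U]/Q faceL_compress.
Qed.

Lemma faceL_affine_iso : affine_iso faceL (@K (\rank V)).
Proof.
exists restrL; split; first exact: restrL_K.
split; first by move=> w1 w2 L1 L2 E; rewrite -(extendL_restrL L1) E extendL_restrL.
split; last by [].
by move=> v Kv; exists (extendL v); split; [apply: extendL_faceL | apply: restrL_extendL].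
Qed.
End FaceOfL.

Theorem mainTheorem3 (m n p : nat) (hp : (0 < p)%N)
  (e : 'I_p -> 'cV[algC]_m) (f : 'I_p -> 'cV[algC]_n) :
  (forall i, unitv (e i)) -> (forall i, unitv (f i)) ->
  (forall i, ((e i)^T == (e (Ordinal hp))^T)%MS) ->
  let F := face_gen (@Sep m n) (fun w => exists i, w = vstate (tensv (e i) (f i))) in
  let V := Lmx (e (Ordinal hp)) f in
  is_face (@K (m * n)) F /\
  (exists Q : 'M[algC]_(m * n),
     adj Q = Q /\ Q *m Q = Q /\
     (forall z : 'cV[algC]_(m * n), Q *m z = z <-> (z^T <= V)%MS) /\
     (forall w, F w <-> (K w /\ w Q = 1))) /\
  affine_iso F (@K (\rank V)).
Proof.
move=> e_unit f_unit e_line F V.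
have -> : F = faceL hp e f.
  apply: functional_extensionality => w; apply: propositional_extensionality.
  exact: face_gen_faceL.
split; first by apply: faceL_face_of => // w [].
split; last exact: faceL_affine_iso.
exists (projL hp e f); split; first exact: projL_adj.
split; first exact: projL_idem.
by split=> // z; apply: projL_fix.
Qed.
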